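(* Let $\mathcal A$ be a finite alphabet and let $\Psi$ be a symmetry on $\mathcal A^*$. Then $\Psi$ is either a morphism or an antimorphism.
   Context: A symmetry on $\mathcal A^*$ is a map $\Psi:\mathcal A^*\to\mathcal A^*$ such that (1) $\Psi$ is a bijection and (2) for all $w,v\in\mathcal A^*$, the number of occurrences of $w$ in $v$ equals the number of occurrences of $\Psi(w)$ in $\Psi(v)$ (an occurrence of $w$ in $v=v_1\cdots v_m$ is an index $i$ such that $w$ is a prefix of $v_iv_{i+1}\cdots v_m$). $\Psi$ is a morphism if $\Psi(vw)=\Psi(v)\Psi(w)$ and an antimorphism if $\Psi(vw)=\Psi(w)\Psi(v)$ for all $v,w\in\mathcal A^*$. *)

From mathcomp Require Import all_boot.
Set Implicit Arguments. Unset Strict Implicit. Unset Printing Implicit Defensive.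

(* Words over A are sequences [seq A]. An occurrence of w in v = v_1...v_m is an
   index i (1 <= i <= m; here 0-based, i < size v) such that w is a prefix of
   v_i v_{i+1} ... v_m. *)
Definition occ (A : eqType) (w v : seq A) : nat :=
  count (fun i => prefix w (drop i v)) (iota 0 (size v)).

Definition symmetry (A : eqType) (Psi : seq A -> seq A) : Prop :=
  bijective Psi /\ forall w v : seq A, occ w v = occ (Psi w) (Psi v).

Definition morphism (A : eqType) (Psi : seq A -> seq A) : Prop :=
  forall v w : seq A, Psi (v ++ w) = Psi v ++ Psi w.

Definition antimorphism (A : eqType) (Psi : seq A -> seq A) : Prop :=
  forall v w : seq A, Psi (v ++ w) = Psi w ++ Psi v.

From mathcomp Require Import all_boot zify.
Set Implicit Arguments. Unset Strict Implicit. Unset Printing Implicit Defensive.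

(* A symmetry Psi preserves lengths (|v| = occ [::] v), so it restricts to a
   permutation sigma of the letters.  The two longest proper factors of a word
   x :: w are its prefix and its suffix of length |w|, and they are the only
   factors of that length; hence Psi (x :: w) has Psi of these two words as its
   prefix and suffix, in some order.  On two-letter words this gives
   Psi [a; b] = [sigma a; sigma b] or [sigma b; sigma a], and comparing the
   overlapping factors of three-letter words shows that the choice is the same
   for all pairs.  Reversal is a symmetry, so the antimorphic case reduces to
   the morphic one, where Psi = map sigma follows by induction on the length:
   counting occurrences of letters and of two-letter words shows that the head
   of Psi (x :: w) is sigma x, and if the two factors come out swapped then
   w is a constant word, for which both orders agree. *)

Section Occurrences.
Variable A : eqType.
Implicit Types (x y : A) (u v w : seq A).

Lemma occ_cons w x v : occ w (x :: v) = prefix w (x :: v) + occ w v.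
Proof. by rewrite /occ /= -add1n iotaDl count_map. Qed.

Lemma occ0s v : occ [::] v = size v.
Proof.
by rewrite /occ (eq_count (a2 := predT)) ?count_predT ?size_iota // => i; case: drop.
Qed.

Lemma size_prefix u v : prefix u v -> size u <= size v.
Proof. by move/prefixP => [s ->]; rewrite size_cat leq_addr. Qed.

Lemma prefix_eq_size u v : size u = size v -> prefix u v = (u == v).
Proof. by rewrite prefixE => ->; rewrite take_size eq_sym. Qed.

Lemma occ_gt0P w v :
  reflect (exists2 i, i < size v & prefix w (drop i v)) (0 < occ w v).
Proof.
rewrite /occ -has_count; apply: (iffP hasP) => [[i] | [i lt_iv pre]].
  by rewrite mem_iota => lt_iv pre; exists i.
by exists i; rewrite ?mem_iota.
Qed.

Lemma occ_oversize w v : size v < size w -> occ w v = 0.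
Proof.
move=> lt_vw; apply/eqP; rewrite -leqn0 leqNgt; apply/occ_gt0P => [[i _ /size_prefix]].
by rewrite size_drop leqNgt (leq_ltn_trans (leq_subr _ _) lt_vw).
Qed.

Lemma occ_self w : w != [::] -> occ w w = 1.
Proof. by case: w => // x w _; rewrite occ_cons prefix_refl occ_oversize. Qed.

Lemma prefix_rconsE w u x : prefix w (rcons u x) = (w == rcons u x) + prefix w u :> nat.
Proof.
elim: u w => [|y u IHu] [|a w] //=.
  by rewrite eqseq_cons addn0; case: w.
by rewrite eqseq_cons; case: (a == y); rewrite /= ?IHu.
Qed.

Lemma suffix_consE w x u : suffix w (x :: u) = (w == x :: u) + suffix w u :> nat.
Proof. by rewrite /suffix rev_cons prefix_rconsE -rev_cons (can_eq revK). Qed.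

Lemma occ_belast x w : 0 < occ (belast x w) (x :: w).
Proof. by apply/occ_gt0P; exists 0; rewrite // drop0 lastI prefix_rcons. Qed.

Lemma occ_behead x w : 0 < occ w (x :: w).
Proof. by rewrite occ_cons; case: w => [|y w] //; rewrite occ_self ?addn1. Qed.

Lemma occ_maximal_factor x w u :
  size u = size w -> 0 < occ u (x :: w) -> u = belast x w \/ u = w.
Proof.
move=> szu /occ_gt0P [[|[|i]] lt_i pre].
- left; move: pre; rewrite drop0 lastI prefixE szu -(size_belast x) -cats1.
  by rewrite take_size_cat // => /eqP.
- by right; move: pre; rewrite /= drop0 prefix_eq_size // => /eqP.
- by move: pre lt_i => /size_prefix; rewrite size_drop szu /=; lia.
Qed.

Lemma occ_rcons w v x : occ w (rcons v x) = suffix w (rcons v x) + occ w v.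
Proof.
elim: v => [|y v IHv].
  have := prefix_rconsE w [::] x; have := suffix_consE w x [::].
  by rewrite occ_cons prefixs0 suffixs0 /= => -> ->.
rewrite rcons_cons occ_cons IHv occ_cons -rcons_cons prefix_rconsE suffix_consE.
by rewrite addnACA.
Qed.

Lemma occ_rev w v : occ (rev w) (rev v) = occ w v.
Proof.
elim: v => [|x v IHv] //.
by rewrite rev_cons occ_rcons -rev_cons IHv occ_cons suffix_rev.
Qed.
End Occurrences.

Lemma doubleton_eq (T : Type) (a b c d : T) :
  a = c \/ a = d -> b = c \/ b = d -> c = a \/ c = b -> d = a \/ d = b ->
  (a = c /\ b = d) \/ (a = d /\ b = c).
Proof. by intuition congruence. Qed.

Lemma symmetry_rev (A : eqType) (Psi : seq A -> seq A) :
  symmetry Psi -> symmetry (fun v => rev (Psi v)).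
Proof.
move=> [bijPsi occPsi]; split=> [|w v]; last by rewrite occ_rev occPsi.
exact: bij_comp (Bijective (@revK A) (@revK A)) bijPsi.
Qed.

Section Symmetry.
Variables (A : eqType) (Psi : seq A -> seq A).
Hypothesis symPsi : symmetry Psi.

Lemma symmetry_nil : Psi [::] = [::].
Proof.
apply/eqP; apply: contraT => nz_Psi0.
by have := symPsi.2 [::] [::]; rewrite (occ_self nz_Psi0).
Qed.

Lemma size_symmetry v : size (Psi v) = size v.
Proof. by rewrite -occ0s -symmetry_nil -symPsi.2 occ0s. Qed.

Definition sigma a := head a (Psi [:: a]).

Lemma symmetry1 a : Psi [:: a] = [:: sigma a].
Proof. by rewrite /sigma; have := size_symmetry [:: a]; case: (Psi [:: a]) => [|b []]. Qed.

Lemma symmetry_inj : injective Psi.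
Proof. by have [g PsiK _] := symPsi.1; apply: can_inj PsiK. Qed.

Lemma sigma_inj : injective sigma.
Proof.
move=> a b eq_ab.
by have /symmetry_inj [] : Psi [:: a] = Psi [:: b] by rewrite !symmetry1 eq_ab.
Qed.

Lemma symmetry_cons x w : exists y Y, Psi (x :: w) = y :: Y /\
  ((belast y Y = Psi (belast x w) /\ Y = Psi w) \/
   (belast y Y = Psi w /\ Y = Psi (belast x w))).
Proof.
(* Both Psi and its inverse g preserve lengths and occurrence counts, so they
   exchange the factors of length |w| of x :: w and of Psi (x :: w). *)
have [g _ gK] := symPsi.1.
case PsiV: (Psi (x :: w)) (size_symmetry (x :: w)) => [//|y Y] [szY].
exists y, Y; split=> //.
have occ_factor_Y z : size z = size w -> 0 < occ z (y :: Y) ->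
    z = Psi (belast x w) \/ z = Psi w.
  move=> szz; rewrite -[z]gK -PsiV -symPsi.2 => /occ_maximal_factor.
  have -> : size (g z) = size w by rewrite -size_symmetry gK.
  by case=> // ->; [left | right].
have occ_factor_X u : size u = size w -> 0 < occ u (x :: w) ->
    Psi u = belast y Y \/ Psi u = Y.
  rewrite symPsi.2 PsiV => szu; apply: occ_maximal_factor.
  by rewrite size_symmetry szu szY.
apply: doubleton_eq.
- by apply: occ_factor_Y (occ_belast y Y); rewrite size_belast.
- exact: occ_factor_Y (occ_behead y Y).
- by apply: occ_factor_X (occ_belast x w); rewrite size_belast.
- exact: occ_factor_X (occ_behead x w).
Qed.

Lemma symmetry2 a b :
  Psi [:: a; b] = [:: sigma a; sigma b] \/ Psi [:: a; b] = [:: sigma b; sigma a].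
Proof.
have [y [Y [-> factors]]] := symmetry_cons a [:: b].
by case: factors => -[eq_y eq_Y]; [left | right];
  rewrite /= !symmetry1 in eq_y eq_Y; subst Y; case: eq_y => ->.
Qed.

Lemma symmetry3_orientation x y z : x != y -> y != z ->
  (Psi [:: x; y] == [:: sigma x; sigma y]) = (Psi [:: y; z] == [:: sigma y; sigma z]).
Proof.
move=> neq_xy neq_yz; have [Y0 [Y [_ factors]]] := symmetry_cons x [:: y; z].
move: factors; rewrite /=.
(* The suffix of Psi [:: x; y; z] starts with the second letter of its prefix;
   a mismatched orientation would put two different letters there. *)
case: (symmetry2 x y) => ->; case: (symmetry2 y z) => ->;
  case=> -[+ eq_Y]; rewrite eq_Y => /(congr1 (nth Y0 ^~ 1)) /= /sigma_inj eq_mid;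
  subst; rewrite ?eqxx // in neq_xy neq_yz *.
rewrite !eqseq_cons !(inj_eq sigma_inj) [y == x]eq_sym.
by rewrite (negbTE neq_xy) (negbTE neq_yz) !andFb andbF.
Qed.
End Symmetry.

Lemma occ1_cons (A : finType) (c x : A) v :
  occ [:: c] (x :: v) = (x == c) + \sum_(d : A) occ [:: d; c] (x :: v).
Proof.
elim: v x => [|y v IHv] x.
  rewrite big1 => [|d _]; last exact: occ_oversize.
  by rewrite /occ /= andbT eq_sym.
have prefix_pair d : prefix [:: d; c] [:: x, y & v] = (d == x) && (y == c).
  by rewrite /= prefix0s [c == y]eq_sym andbT.
have -> : \sum_d occ [:: d; c] [:: x, y & v] = (y == c) + \sum_d occ [:: d; c] (y :: v).
  rewrite (eq_bigr _ (fun d _ => occ_cons _ _ _)) big_split (bigD1 x) //.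
  rewrite big1 => [|d /negbTE]; last by rewrite prefix_pair => ->.
  by rewrite prefix_pair eqxx /= addn0.
by rewrite occ_cons IHv /= andbT eq_sym.
Qed.

Lemma belast_fixed2 (T : Type) (c : T) s :
  belast c (belast c s) = s -> belast c s = s.
Proof. by elim: s => //= a s IHs [<- /IHs ->]. Qed.

Section MorphicSymmetry.
Variables (A : finType) (Psi : seq A -> seq A).
Hypothesis symPsi : symmetry Psi.
Hypothesis Psi2 : forall a b, Psi [:: a; b] = [:: sigma Psi a; sigma Psi b].

Lemma morphic_symmetry_head x w y Y : Psi (x :: w) = y :: Y -> y = sigma Psi x.
Proof.
(* The occurrences of a letter c off the head position are those of the
   two-letter words d :: [:: c], and Psi permutes these counts. *)
move=> PsiV; apply/eqP.
have := symPsi.2 [:: x] (x :: w); rewrite symmetry1 // PsiV !occ1_cons eqxx.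
rewrite [in RHS](reindex_inj (sigma_inj symPsi)) /=.
under eq_bigr => d _ do rewrite symPsi.2 Psi2 PsiV.
by move/eqP; rewrite eqn_add2r; case: (y == _).
Qed.

Lemma morphic_symmetry_map v : Psi v = map (sigma Psi) v.
Proof.
case: v => [|x w]; first exact: symmetry_nil.
have [n le_wn] := ubnP (size w); elim: n => // n IHn in x w le_wn *.
case: w le_wn => [|x' w] le_wn; first exact: symmetry1.
have [y [Y [PsiV factors]]] := symmetry_cons symPsi x (x' :: w).
have IHw : Psi (x' :: w) = map (sigma Psi) (x' :: w) by apply: IHn.
have IHb : Psi (belast x (x' :: w)) = map (sigma Psi) (belast x (x' :: w)).
  by apply: IHn; rewrite size_belast.
rewrite PsiV (morphic_symmetry_head PsiV) /=; congr (_ :: _).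
case: factors => [[_ ->] // | [eq_b eq_Y]].
(* Swapped factors: the word map sigma (x' :: w) is fixed by shifting twice
   with the letter sigma x inserted in front, so it is constant. *)
rewrite eq_Y IHb -belast_map; apply: belast_fixed2.
by move: eq_b; rewrite (morphic_symmetry_head PsiV) eq_Y IHb IHw -belast_map.
Qed.
End MorphicSymmetry.

Lemma antimorphic_symmetry_map (A : finType) (Psi : seq A -> seq A) :
  symmetry Psi -> (forall a b, Psi [:: a; b] = [:: sigma Psi b; sigma Psi a]) ->
  forall v, Psi v = rev (map (sigma Psi) v).
Proof.
move=> symPsi Psi2 v; have symRev := symmetry_rev symPsi.
have sigma_rev : sigma (fun u => rev (Psi u)) =1 sigma Psi.
  by move=> a; rewrite /sigma symmetry1.
rewrite -(eq_map sigma_rev) -(morphic_symmetry_map symRev) ?revK // => a b.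
by rewrite Psi2 !sigma_rev.
Qed.

Lemma symmetry_orientation (A : finType) (Psi : seq A -> seq A) : symmetry Psi ->
  (forall a b, Psi [:: a; b] = [:: sigma Psi a; sigma Psi b]) \/
  (forall a b, Psi [:: a; b] = [:: sigma Psi b; sigma Psi a]).
Proof.
move=> symPsi; pose forward a b := Psi [:: a; b] == [:: sigma Psi a; sigma Psi b].
have forward_const a b c d : a != b -> c != d -> forward a b = forward c d.
  move=> neq_ab; case: (eqVneq b c) => [<- | neq_bc neq_cd].
    exact: symmetry3_orientation.
  rewrite /forward (symmetry3_orientation symPsi neq_ab neq_bc).
  exact: symmetry3_orientation.
have diag a : Psi [:: a; a] = [:: sigma Psi a; sigma Psi a].
  by case: (symmetry2 symPsi a a).
case: (boolP [exists a, exists b, (a != b) && ~~ forward a b]) => [|all_forward].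
  case/existsP=> a /existsP [b /andP [neq_ab back_ab]].
  right=> c d; case: (eqVneq c d) => [-> | neq_cd]; first exact: diag.
  case: (symmetry2 symPsi c d) => // forward_cd.
  by move: back_ab; rewrite (forward_const _ _ _ _ neq_ab neq_cd) /forward forward_cd eqxx.
left=> c d; case: (eqVneq c d) => [-> | neq_cd]; first exact: diag.
apply/eqP; apply: contraNT all_forward => back_cd.
by apply/existsP; exists c; apply/existsP; exists d; rewrite neq_cd.
Qed.

Theorem lemma15 (A : finType) (Psi : seq A -> seq A) :
  symmetry Psi -> morphism Psi \/ antimorphism Psi.
Proof.
move=> symPsi; case: (symmetry_orientation symPsi) => Psi2; [left | right] => v w.
  by rewrite !(morphic_symmetry_map symPsi Psi2) map_cat.
by rewrite !(antimorphic_symmetry_map symPsi Psi2) map_cat rev_cat.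
Qed.
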